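(* Let $q$ be a prime power and $1\le t_i\le t_o\le s$. If there exists a linear $(t_i,t_o,s,q)$-AONT, then there exists a linear $(t_i',t_o,s,q)$-AONT for every $t_i'$ with $1\le t_i'\le t_i$.
   Context: A linear $(t_i,t_o,s,q)$-AONT is given by an invertible $s\times s$ matrix $M$ over $\mathbb{F}_q$ defining the map $\mathbf{x}\mapsto\mathbf{y}=\mathbf{x}M^{-1}$ on row vectors of $\mathbb{F}_q^s$, such that for every set $I$ of $t_i$ input coordinates and every set $J$ of $s-t_o$ output coordinates, the pair $((x_i)_{i\in I},(y_j)_{j\in J})$ takes every value in $\mathbb{F}_q^{t_i+s-t_o}$ equally often as $\mathbf{x}$ ranges over $\mathbb{F}_q^s$. Equivalently, $M$ is invertible and every $t_o\times t_i$ submatrix of $M$ has rank $t_i$. *)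

From mathcomp Require Import all_boot all_algebra.
Set Implicit Arguments. Unset Strict Implicit. Unset Printing Implicit Defensive.
Import GRing.Theory.
Local Open Scope ring_scope.

(* A linear (t_i, t_o, s, q)-AONT over the finite field F (q = #|F|) is
   given by an invertible s x s matrix M such that every t_o x t_i
   submatrix of M (rows selected by an injective f, columns by an
   injective g) has rank t_i. *)
Definition linear_AONT (F : fieldType) (ti to s : nat) (M : 'M[F]_s) : Prop :=
  M \in unitmx /\
  forall (f : 'I_to -> 'I_s) (g : 'I_ti -> 'I_s),
    injective f -> injective g -> \rank (mxsub f g M) = ti.

(* The matrix itself does not change.  Any t_i' chosen columns extend to t_i
   columns; on the chosen t_o rows these t_i columns are linearly independent,
   hence so is any subfamily of them. *)
From mathcomp Require Import all_boot all_algebra.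
Set Implicit Arguments. Unset Strict Implicit. Unset Printing Implicit Defensive.
Import GRing.Theory.
Local Open Scope ring_scope.

Lemma widen_ord_inj n m (le_nm : (n <= m)%N) : injective (widen_ord le_nm).
Proof. by move=> i j /(congr1 val) eq_ij; apply: val_inj. Qed.

Lemma widen_ord_extend (T : finType) m n (le_mn : (m <= n)%N)
    (g' : 'I_m -> T) : (n <= #|T|)%N -> injective g' ->
  exists2 g : 'I_n -> T, injective g & g \o widen_ord le_mn =1 g'.
Proof.
move=> le_nT g'_inj.
(* an enumeration of T beginning with g' 0, ..., g' (m - 1) *)
pose t := codom g' ++ enum [predC codom g'].
have size_t : size t == #|T|.
  by rewrite size_cat size_codom -cardE -(card_codom g'_inj) cardC.
have t_uniq : uniq (Tuple size_t).
  rewrite cat_uniq enum_uniq andbT (map_inj_uniq g'_inj) enum_uniq /=.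
  by apply/hasPn => x; rewrite mem_enum.
exists (tnth (Tuple size_t) \o widen_ord le_nT).
  by apply: inj_comp; [apply/tuple_uniqP | apply: widen_ord_inj].
move=> j /=; rewrite (tnth_nth (g' j)) /= nth_cat size_codom card_ord /= ltn_ord.
by rewrite codomE (nth_map j) ?size_enum_ord ?ltn_ord // nth_ord_enum.
Qed.

Section FullColumnRank.

Variable F : fieldType.

Lemma row_free_rowsub1 n n' (h : 'I_n' -> 'I_n) :
  injective h -> row_free (rowsub h (1%:M : 'M[F]_n)).
Proof.
move=> h_inj; apply/row_freeP; exists (colsub h 1%:M).
by apply/matrixP => i j; rewrite -mxsub_mul mulmx1 !mxE (inj_eq h_inj).
Qed.

Lemma mxrank_colsub_full m n n' (h : 'I_n' -> 'I_n) (A : 'M[F]_(m, n)) :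
  injective h -> \rank A = n -> \rank (colsub h A) = n'.
Proof.
move=> h_inj rankA.
rewrite -[A]mulmx1 -mulmx_colsub -mxrank_tr trmx_mul mxrankMfree; last first.
  by rewrite /row_free mxrank_tr rankA.
rewrite trmx_mxsub trmx1; exact/eqP/row_free_rowsub1.
Qed.

End FullColumnRank.

Lemma linear_AONT_leq_ti (F : fieldType) ti ti' to s (M : 'M[F]_s) :
  (ti' <= ti)%N -> (ti <= s)%N ->
  linear_AONT ti to M -> linear_AONT ti' to M.
Proof.
move=> le_ti' le_ti_s [M_unit M_rank]; split=> // f g' f_inj g'_inj.
have le_ti_card : (ti <= #|'I_s|)%N by rewrite card_ord.
have [g g_inj g_ext] := widen_ord_extend le_ti' le_ti_card g'_inj.
have -> : mxsub f g' M = colsub (widen_ord le_ti') (mxsub f g M).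
  by apply/matrixP => i j; rewrite !mxE -g_ext.
by apply: mxrank_colsub_full; [apply: widen_ord_inj | apply: M_rank].
Qed.

Theorem mainTheorem9 (F : finFieldType) (ti to s : nat) :
  (1 <= ti)%N -> (ti <= to)%N -> (to <= s)%N ->
  (exists M : 'M[F]_s, linear_AONT ti to M) ->
  forall ti' : nat, (1 <= ti')%N -> (ti' <= ti)%N ->
    exists M' : 'M[F]_s, linear_AONT ti' to M'.
Proof.
move=> _ le_ti_to le_to_s [M M_AONT] ti' _ le_ti'.
exists M; apply: linear_AONT_leq_ti M_AONT => //.
exact: leq_trans le_to_s.
Qed.
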